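(* Let $\mathsf C$ be a triangulated category and let $A\to B\to C\to\Sigma A$ and $A'\to B'\to C'\to\Sigma A'$ be two homotopy equivalent exact triangles. Then $A\oplus B'\oplus C\cong A'\oplus B\oplus C'$.
   Context: An exact triangle $A\to B\to C\to\Sigma A$ induces a presentation of a functor $F\colon\mathsf C^{\mathrm{op}}\to\mathrm{Ab}$ if there is an exact sequence $\mathrm{Hom}(-,B)\to\mathrm{Hom}(-,C)\to F\to0$ in which the first map is induced by $B\to C$. Two exact triangles are homotopy equivalent if they induce presentations of the same functor. *)

From mathcomp Require Import all_boot all_algebra.
Set Implicit Arguments. Unset Strict Implicit. Unset Printing Implicit Defensive.
Import GRing.Theory.
Local Open Scope ring_scope.

Record PreAddCat := MkPreAddCat {
  Obj :> Type;
  Hom : Obj -> Obj -> zmodType;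
  idm : forall a, Hom a a;
  comp : forall a b c, Hom b c -> Hom a b -> Hom a c;
  compA : forall a b c d (h : Hom c d) (g : Hom b c) (f : Hom a b),
      comp h (comp g f) = comp (comp h g) f;
  comp1m : forall a b (f : Hom a b), comp (idm b) f = f;
  compm1 : forall a b (f : Hom a b), comp f (idm a) = f;
  compDl : forall a b c (g1 g2 : Hom b c) (f : Hom a b),
      comp (g1 + g2) f = comp g1 f + comp g2 f;
  compDr : forall a b c (g : Hom b c) (f1 f2 : Hom a b),
      comp g (f1 + f2) = comp g f1 + comp g f2 }.

Arguments Hom {_} _ _.
Arguments idm {_} _.
Arguments comp {_ _ _ _} _ _.
Notation "g \oc f" := (comp g f) (at level 40, left associativity).

Definition is_iso (C : PreAddCat) (a b : C) (f : Hom a b) : Prop :=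
  exists g : Hom b a, g \oc f = idm a /\ f \oc g = idm b.

Definition isomorphic (C : PreAddCat) (a b : C) : Prop :=
  exists f : Hom a b, is_iso f.

Record AddCat := MkAddCat {
  ac_pre :> PreAddCat;
  zobj : Obj ac_pre;
  zobj_init : forall a (f : Hom zobj a), f = 0;
  zobj_term : forall a (f : Hom a zobj), f = 0;
  bip : Obj ac_pre -> Obj ac_pre -> Obj ac_pre;
  bin1 : forall a b, Hom a (bip a b);
  bin2 : forall a b, Hom b (bip a b);
  bpr1 : forall a b, Hom (bip a b) a;
  bpr2 : forall a b, Hom (bip a b) b;
  bp11 : forall a b, bpr1 a b \oc bin1 a b = idm a;
  bp22 : forall a b, bpr2 a b \oc bin2 a b = idm b;
  bp12 : forall a b, bpr1 a b \oc bin2 a b = 0;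
  bp21 : forall a b, bpr2 a b \oc bin1 a b = 0;
  bpsum : forall a b, bin1 a b \oc bpr1 a b + bin2 a b \oc bpr2 a b = idm (bip a b) }.

Arguments zobj {_}.
Arguments bip {_} _ _.

Record triangle (C : AddCat) (Sig : C -> C) := Tri {
  ta : C; tb : C; tc : C;
  tu : Hom ta tb; tv : Hom tb tc; tw : Hom tc (Sig ta) }.
Arguments triangle : clear implicits.
Arguments Tri {C Sig ta tb tc}.

Section TriAxioms.
Variables (C : AddCat) (Sig : C -> C)
          (Sigm : forall a b : C, Hom a b -> Hom (Sig a) (Sig b))
          (dist : triangle C Sig -> Prop).

Definition tri_morph (T T' : triangle C Sig)
  (f : Hom (ta T) (ta T')) (g : Hom (tb T) (tb T')) (h : Hom (tc T) (tc T')) :=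
  [/\ g \oc tu T = tu T' \oc f,
      h \oc tv T = tv T' \oc g &
      Sigm f \oc tw T = tw T' \oc h].
Arguments tri_morph : clear implicits.

Definition Sig_is_additive_autoequivalence : Prop :=
  [/\ (forall a, Sigm (idm a) = idm (Sig a)),
      (forall a b c (g : Hom b c) (f : Hom a b), Sigm (g \oc f) = Sigm g \oc Sigm f),
      (forall a b (f g : Hom a b), Sigm (f + g) = Sigm f + Sigm g),
      (forall a b, bijective (@Sigm a b)) &
      (forall b, exists a, isomorphic (Sig a) b)].

Definition rot (T : triangle C Sig) : triangle C Sig :=
  Tri (tv T) (tw T) (- Sigm (tu T)).

Definition TR1 : Prop :=
  [/\ (forall a : C, dist (Tri (idm a) (0 : Hom a zobj) (0 : Hom zobj (Sig a)))),
      (forall T T', dist T ->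
         (exists f g h, tri_morph T T' f g h /\ [/\ is_iso f, is_iso g & is_iso h]) ->
         dist T') &
      (forall (a b : C) (u : Hom a b), exists c (v : Hom b c) (w : Hom c (Sig a)),
         dist (Tri u v w))].

Definition TR2 : Prop := forall T, dist T <-> dist (rot T).

Definition TR3 : Prop :=
  forall T T' (f : Hom (ta T) (ta T')) (g : Hom (tb T) (tb T')),
    dist T -> dist T' -> g \oc tu T = tu T' \oc f ->
    exists h, tri_morph T T' f g h.

Definition TR4 : Prop :=
  forall (x y z z' x' y' : C) (u : Hom x y) (v : Hom y z)
         (j : Hom y z') (k : Hom z' (Sig x))
         (l : Hom z x') (i : Hom x' (Sig y))
         (m : Hom z y') (n : Hom y' (Sig x)),
    dist (Tri u j k) -> dist (Tri v l i) -> dist (Tri (v \oc u) m n) ->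
    exists (f : Hom z' y') (g : Hom y' x'),
      [/\ dist (Tri f g (Sigm j \oc i)),
          f \oc j = m \oc v, n \oc f = k,
          g \oc m = l & Sigm u \oc n = i \oc g].
End TriAxioms.

Record TriCat := MkTriCat {
  tr_base :> AddCat;
  Sig : tr_base -> tr_base;
  Sigm : forall a b : tr_base, Hom a b -> Hom (Sig a) (Sig b);
  dist : triangle tr_base Sig -> Prop;
  Sig_ax : Sig_is_additive_autoequivalence Sigm;
  tr1 : TR1 Sigm dist;
  tr2 : TR2 Sigm dist;
  tr3 : TR3 Sigm dist;
  tr4 : TR4 Sigm dist }.
Arguments Sig : clear implicits.

Record ContraFunctor (C : PreAddCat) := MkContraFunctor {
  FO : C -> zmodType;
  FM : forall a b : C, Hom a b -> FO b -> FO a;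
  FM_add : forall a b (f : Hom a b) (x y : FO b), FM f (x + y) = FM f x + FM f y;
  FM_id : forall a (x : FO a), FM (idm a) x = x;
  FM_comp : forall a b c (g : Hom b c) (f : Hom a b) (x : FO c),
      FM (g \oc f) x = FM f (FM g x) }.

(* The exact triangle T induces a presentation of F: there is an exact sequence
   Hom(-,B) --(v o -)--> Hom(-,C) --eta--> F --> 0  of functors C^op -> Ab. *)
Definition induces_presentation (C : TriCat) (T : triangle C (Sig C))
    (F : ContraFunctor C) : Prop :=
  exists eta : forall X : C, Hom X (tc T) -> FO F X,
    [/\ (forall X (x y : Hom X (tc T)), eta X (x + y) = eta X x + eta X y),
        (forall X Y (f : Hom X Y) (x : Hom Y (tc T)),
            eta X (x \oc f) = FM f (eta Y x)),
        (forall X (z : FO F X), exists x, eta X x = z) &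
        (forall X (x : Hom X (tc T)),
            eta X x = 0 <-> exists y : Hom X (tb T), x = tv T \oc y)].

Definition homotopy_equivalent (C : TriCat) (T T' : triangle C (Sig C)) : Prop :=
  exists F : ContraFunctor C, induces_presentation T F /\ induces_presentation T' F.

From Pilot Require Import Defs.
From mathcomp Require Import all_boot all_algebra.
Set Implicit Arguments. Unset Strict Implicit. Unset Printing Implicit Defensive.
Import GRing.Theory.
Local Open Scope ring_scope.
Local Notation Hom := Defs.Hom.
Local Notation compA := Defs.compA.
Local Notation bin1 := Defs.bin1.
Local Notation bin2 := Defs.bin2.
Local Notation tri_morph T T' := (@Defs.tri_morph _ _ (@Sigm _) T T').

(* Comparing the two presentations of the same functor gives maps x : C -> C'
   and y : C' -> C that are mutually inverse modulo the images of v and v';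
   each of them completes to a morphism of triangles, (f, g, x) and
   (f', g', y).  With these maps
     A --(f, -u)--> A' + B --[[u', g], [0, -v]]--> B' + C --(v', x)--> C'
   is a complex which is split at both ends and exact in the middle, exactness
   meaning that each map is a weak cokernel of the previous one (exact
   triangles provide weak cokernels).  Such a complex is contractible, so
   A + (B' + C) and (A' + B) + C' are isomorphic. *)

Section PreAdditive.
Variable C : PreAddCat.
Implicit Types a b c : C.

Lemma comp0r a b c (g : Hom b c) : g \oc (0 : Hom a b) = 0.
Proof. by apply: (addrI (g \oc 0)); rewrite -compDr !addr0. Qed.

Lemma comp0l a b c (f : Hom a b) : (0 : Hom b c) \oc f = 0.
Proof. by apply: (addrI (0 \oc f)); rewrite -compDl !addr0. Qed.

Lemma compNr a b c (g : Hom b c) (f : Hom a b) : g \oc (- f) = - (g \oc f).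
Proof. by apply: (addrI (g \oc f)); rewrite -compDr !subrr comp0r. Qed.

Lemma compNl a b c (g : Hom b c) (f : Hom a b) : (- g) \oc f = - (g \oc f).
Proof. by apply: (addrI (g \oc f)); rewrite -compDl !subrr comp0l. Qed.

Lemma compBr a b c (g : Hom b c) (f1 f2 : Hom a b) :
  g \oc (f1 - f2) = g \oc f1 - g \oc f2.
Proof. by rewrite compDr compNr. Qed.

Lemma compBl a b c (g1 g2 : Hom b c) (f : Hom a b) :
  (g1 - g2) \oc f = g1 \oc f - g2 \oc f.
Proof. by rewrite compDl compNl. Qed.

Lemma is_iso_of_inverses a b (f : Hom a b) (l r : Hom b a) :
  l \oc f = idm a -> f \oc r = idm b -> is_iso f.
Proof.
move=> lK rK; exists l; split=> //.
suff -> : l = r by [].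
by rewrite -[l]compm1 -rK compA lK comp1m.
Qed.

Lemma is_iso_of_comp_isos a b (f : Hom a b) (g : Hom b a) :
  is_iso (g \oc f) -> is_iso (f \oc g) -> is_iso f.
Proof.
move=> [l [lK _]] [r [_ rK]].
by apply: (is_iso_of_inverses (l := l \oc g) (r := g \oc r)); rewrite -?lK -?rK !compA.
Qed.

Lemma isomorphic_trans a b c : isomorphic a b -> isomorphic b c -> isomorphic a c.
Proof.
move=> [f [f' [ff' f'f]]] [g [g' [gg' g'g]]]; exists (g \oc f), (f' \oc g'); split.
  by rewrite -compA (compA g') gg' comp1m.
by rewrite -compA (compA f) f'f comp1m.
Qed.

Definition weak_coker a b c (u : Hom a b) (v : Hom b c) : Prop :=
  forall z (h : Hom b z), h \oc u = 0 -> exists k : Hom c z, h = k \oc v.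

End PreAdditive.

Lemma morph_addB (U V : zmodType) (e : U -> V) :
  {morph e : u v / u + v} -> {morph e : u v / u - v}.
Proof.
move=> eD u v; have eN w : e (- w) = - e w.
  by apply: (addrI (e w)); rewrite -eD !subrr; apply: (addrI (e 0)); rewrite -eD !addr0.
by rewrite eD eN.
Qed.

Section Biproducts.
Variable C : AddCat.
Implicit Types p q r s z w : C.

Definition row p q z (f : Hom p z) (g : Hom q z) : Hom (bip p q) z :=
  f \oc bpr1 p q + g \oc bpr2 p q.

Definition col p q z (f : Hom z p) (g : Hom z q) : Hom z (bip p q) :=
  bin1 p q \oc f + bin2 p q \oc g.

Definition mx2 p q r s (a : Hom p r) (b : Hom q r) (c : Hom p s) (d : Hom q s) :
  Hom (bip p q) (bip r s) := col (row a b) (row c d).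

Lemma row_bin1 p q z (f : Hom p z) (g : Hom q z) : row f g \oc bin1 p q = f.
Proof. by rewrite /row compDl -!compA bp11 bp21 comp0r addr0 compm1. Qed.

Lemma row_bin2 p q z (f : Hom p z) (g : Hom q z) : row f g \oc bin2 p q = g.
Proof. by rewrite /row compDl -!compA bp12 bp22 comp0r add0r compm1. Qed.

Lemma bpr1_col p q z (f : Hom z p) (g : Hom z q) : bpr1 p q \oc col f g = f.
Proof. by rewrite /col compDr !compA bp11 bp12 comp0l addr0 comp1m. Qed.

Lemma bpr2_col p q z (f : Hom z p) (g : Hom z q) : bpr2 p q \oc col f g = g.
Proof. by rewrite /col compDr !compA bp21 bp22 comp0l add0r comp1m. Qed.

Lemma row_col p q z w (f : Hom p z) (g : Hom q z) (h : Hom w p) (k : Hom w q) :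
  row f g \oc col h k = f \oc h + g \oc k.
Proof. by rewrite /col compDr !compA row_bin1 row_bin2. Qed.

Lemma comp_row p q z w (k : Hom z w) (f : Hom p z) (g : Hom q z) :
  k \oc row f g = row (k \oc f) (k \oc g).
Proof. by rewrite /row compDr !compA. Qed.

Lemma col_comp p q z w (k : Hom w z) (f : Hom z p) (g : Hom z q) :
  col f g \oc k = col (f \oc k) (g \oc k).
Proof. by rewrite /col compDl -!compA. Qed.

Lemma row_eta p q z (h : Hom (bip p q) z) : h = row (h \oc bin1 p q) (h \oc bin2 p q).
Proof. by rewrite /row -!compA -compDr bpsum compm1. Qed.

Lemma col_eta p q z (h : Hom z (bip p q)) : h = col (bpr1 p q \oc h) (bpr2 p q \oc h).
Proof. by rewrite /col !compA -compDl bpsum comp1m. Qed.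

Lemma row_inj p q z (f f' : Hom p z) (g g' : Hom q z) :
  row f g = row f' g' -> f = f' /\ g = g'.
Proof. by move=> e; split; [rewrite -(row_bin1 f g) e row_bin1 | rewrite -(row_bin2 f g) e row_bin2]. Qed.

Lemma row_add p q z (f f' : Hom p z) (g g' : Hom q z) :
  row f g + row f' g' = row (f + f') (g + g').
Proof. by rewrite /row !compDl addrACA. Qed.

Lemma row00 p q z : row (0 : Hom p z) (0 : Hom q z) = 0.
Proof. by rewrite /row !comp0l addr0. Qed.

Lemma col00 p q z : col (0 : Hom z p) (0 : Hom z q) = 0.
Proof. by rewrite /col !comp0r addr0. Qed.

Lemma mx2_comp p q r s t u (a : Hom p r) (b : Hom q r) (c : Hom p s) (d : Hom q s)
    (a' : Hom t p) (b' : Hom u p) (c' : Hom t q) (d' : Hom u q) :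
  mx2 a b c d \oc mx2 a' b' c' d' =
  mx2 (a \oc a' + b \oc c') (a \oc b' + b \oc d')
      (c \oc a' + d \oc c') (c \oc b' + d \oc d').
Proof. by rewrite /mx2 col_comp !row_col !comp_row !row_add. Qed.

Lemma mx2_id p q : mx2 (idm p) 0 0 (idm q) = idm (bip p q).
Proof. by rewrite /mx2 /col /row !comp0l addr0 add0r !comp1m bpsum. Qed.

Lemma is_iso_mx2_unitriangular p q (b : Hom q p) : is_iso (mx2 (idm p) b 0 (idm q)).
Proof.
exists (mx2 (idm p) (- b) 0 (idm q)).
rewrite !mx2_comp !comp1m !compm1 !comp0l !comp0r !addr0 !add0r subrr addrC subrr.
by rewrite mx2_id.
Qed.

Lemma bip_assoc p q r : isomorphic (bip (bip p q) r) (bip p (bip q r)).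
Proof.
exists (col (bpr1 p q \oc bpr1 _ r) (col (bpr2 p q \oc bpr1 _ r) (bpr2 _ r))).
exists (col (col (bpr1 p _) (bpr1 q r \oc bpr2 p _)) (bpr2 q r \oc bpr2 p _)); split.
  rewrite !col_comp -!compA !bpr1_col !bpr2_col !bpr1_col -col_eta.
  by rewrite [RHS]col_eta !compm1.
rewrite !col_comp -!compA !bpr1_col !bpr2_col -col_eta.
by rewrite [RHS]col_eta !compm1.
Qed.

End Biproducts.

Section ContractibleComplex.
Variables (C : AddCat) (X3 X2 X1 X0 : C).
Variables (d3 : Hom X3 X2) (d2 : Hom X2 X1) (d1 : Hom X1 X0).
Hypotheses (d2d3 : d2 \oc d3 = 0) (d1d2 : d1 \oc d2 = 0).
Hypotheses (d2_coker : weak_coker d3 d2) (d1_coker : weak_coker d2 d1).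
Variables (r3 : Hom X2 X3) (s0 : Hom X0 X1).
Hypotheses (r3K : r3 \oc d3 = idm X3) (s0K : d1 \oc s0 = idm X0).

Lemma contracting_homotopy : exists (h1 : Hom X1 X2) (h0 : Hom X0 X1),
  [/\ h1 \oc d2 = idm X2 - d3 \oc r3, h0 \oc d1 = idm X1 - d2 \oc h1
    & d1 \oc h0 = idm X0].
Proof.
have [h1 h1E] : exists h1 : Hom X1 X2, idm X2 - d3 \oc r3 = h1 \oc d2.
  by apply: d2_coker; rewrite compBl comp1m -compA r3K compm1 subrr.
have [h0 h0E] : exists h0 : Hom X0 X1, idm X1 - d2 \oc h1 = h0 \oc d1.
  apply: d1_coker; rewrite compBl comp1m -compA -h1E compBr compm1 compA d2d3.
  by rewrite comp0l subr0 subrr.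
exists h1, h0; split=> //.
have : (d1 \oc h0 - idm X0) \oc d1 = 0.
  by rewrite compBl -compA -h0E compBr compm1 compA d1d2 comp0l subr0 comp1m subrr.
move/(congr1 (fun t => t \oc s0)); rewrite -compA s0K compm1 comp0l.
by move/eqP; rewrite subr_eq0 => /eqP.
Qed.

Lemma contractible_complex_iso : isomorphic (bip X3 X1) (bip X2 X0).
Proof.
have [h1 [h0 [h1E h0E d1h0]]] := contracting_homotopy.
exists (mx2 d3 h1 0 d1).
apply: (is_iso_of_comp_isos (g := mx2 r3 0 d2 h0)).
  rewrite mx2_comp r3K d2d3 h0E !comp0l !comp0r !addr0 addrC subrK.
  exact: is_iso_mx2_unitriangular.
rewrite mx2_comp h1E d1d2 d1h0 !comp0l !comp0r !addr0 !add0r addrC subrK.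
exact: is_iso_mx2_unitriangular.
Qed.

End ContractibleComplex.

Section Triangles.
Variable C : TriCat.
Implicit Types (a b z : C) (T : triangle C (Sig C)).
Local Notation rot := (Defs.rot (@Sigm C)).

Lemma Sig_add a b (f g : Hom a b) : Sigm (f + g) = Sigm f + Sigm g.
Proof. by case: (Sig_ax C). Qed.

Lemma Sig_comp a b c (g : Hom b c) (f : Hom a b) : Sigm (g \oc f) = Sigm g \oc Sigm f.
Proof. by case: (Sig_ax C). Qed.

Lemma Sig_id a : Sigm (idm a) = idm (Sig C a).
Proof. by case: (Sig_ax C). Qed.

Lemma Sig0 a b : Sigm (0 : Hom a b) = 0.
Proof. by apply: (addrI (Sigm (0 : Hom a b))); rewrite -Sig_add !addr0. Qed.

Lemma SigN a b (f : Hom a b) : Sigm (- f) = - Sigm f.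
Proof. by apply: (addrI (Sigm f)); rewrite -Sig_add !subrr Sig0. Qed.

Lemma Sig_inj a b : injective (@Sigm C a b).
Proof. by case: (Sig_ax C) => _ _ _ /(_ a b) [inv invK _] _ f g e; rewrite -(invK f) e invK. Qed.

Lemma Sig_surj a b (h : Hom (Sig C a) (Sig C b)) : exists f, Sigm f = h.
Proof. by case: (Sig_ax C) => _ _ _ /(_ a b) [inv _ Kinv]; exists (inv h). Qed.

Lemma dist_rot T : dist T -> dist (rot T).
Proof. by move/(@tr2 C T). Qed.

Lemma dist_id a : dist (Tri (idm a) (0 : Hom a zobj) (0 : Hom zobj (Sig C a))).
Proof. by case: (@tr1 C). Qed.

Lemma dist_0id z : dist (Tri (0 : Hom zobj z) (idm z) (0 : Hom z (Sig C zobj))).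
Proof.
apply/(@tr2 C); case: (@tr1 C) => _ dist_iso _; apply: (dist_iso _ _ (dist_id z)).
have id_iso : is_iso (idm z) by exists (idm z); rewrite comp1m.
exists (idm z), (idm z), 0; split; first by split; rewrite /= ?comp0l ?comp0r.
split=> //; exists 0; split; rewrite comp0l /= ?(esym (Sig_id _)).
  by rewrite (zobj_init (idm zobj)).
by rewrite (zobj_init (idm zobj)) Sig0.
Qed.

Lemma dist_vu T : dist T -> tv T \oc tu T = 0.
Proof.
move=> dT; have [h [_ /= <- _]] :=
  @tr3 C (Tri (idm (ta T)) 0 0) T (idm (ta T)) (tu T) (dist_id (ta T)) dT erefl.
by rewrite comp0r.
Qed.

Lemma dist_wv T : dist T -> tw T \oc tv T = 0.
Proof. by move/dist_rot/dist_vu. Qed.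

Lemma dist_uw T : dist T -> Sigm (tu T) \oc tw T = 0.
Proof.
by move/dist_rot/dist_rot/dist_vu => /= /eqP; rewrite compNl oppr_eq0 => /eqP.
Qed.

Lemma dist_weak_coker T : dist T -> weak_coker (tu T) (tv T).
Proof.
move=> dT z h hu; have [k [_ /= kv _]] :=
  @tr3 C T (Tri (0 : Hom zobj z) (idm z) 0) 0 h dT (dist_0id z)
       ltac:(by rewrite hu /= comp0r).
by exists k; rewrite kv comp1m.
Qed.

Lemma dist_weak_coker_vw T : dist T -> weak_coker (tv T) (tw T).
Proof. by move/dist_rot/dist_weak_coker. Qed.

(* Weak cokernel property of the rotation [w, -Sig u, -Sig v], desuspended. *)
Lemma dist_factor_tu T : dist T ->
  forall z (h : Hom (ta T) z), Sigm h \oc tw T = 0 -> exists k : Hom (tb T) z, h = k \oc tu T.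
Proof.
move=> /dist_rot/dist_rot/dist_weak_coker dT z h /dT [k] /=.
have [k0 <-] := Sig_surj k; rewrite compNr -Sig_comp -SigN => /Sig_inj ->.
by exists (- k0); rewrite compNl.
Qed.

Lemma tri_morph_completion T T' (g : Hom (tb T) (tb T')) (x : Hom (tc T) (tc T')) :
  dist T -> dist T' -> x \oc tv T = tv T' \oc g -> exists f, tri_morph T T' f g x.
Proof.
move=> dT dT' xg.
have [l [_ lw /=]] := @tr3 C (rot T) (rot T') g x (dist_rot dT) (dist_rot dT') xg.
have [f fE] := Sig_surj l; subst l; rewrite compNl compNr -!Sig_comp => /oppr_inj /Sig_inj gu.
by exists f; split.
Qed.

End Triangles.

Section PresentationComparison.
Variables (C : TriCat) (T T' : triangle C (Sig C)) (F : ContraFunctor C).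

Lemma presentations_comparison :
  induces_presentation T F -> induces_presentation T' F ->
  exists (x : Hom (tc T) (tc T')) (y : Hom (tc T') (tc T)),
    [/\ exists s, y \oc x = idm (tc T) + tv T \oc s,
        exists s', x \oc y = idm (tc T') + tv T' \oc s',
        exists g, x \oc tv T = tv T' \oc g
      & exists g', y \oc tv T' = tv T \oc g'].
Proof.
move=> [eta [etaD etaN etaS etaK]] [eta' [etaD' etaN' etaS' etaK']].
have [x xE] := etaS' (tc T) (eta (tc T) (idm _)).
have [y yE] := etaS (tc T') (eta' (tc T') (idm _)).
have xK X (k : Hom X (tc T)) : eta' X (x \oc k) = eta X k.
  by rewrite etaN' xE -etaN comp1m.
have yK X (k : Hom X (tc T')) : eta X (y \oc k) = eta' X k.
  by rewrite etaN yE -etaN' comp1m.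
exists x, y; split.
- have [s sE] : exists s, y \oc x - idm _ = tv T \oc s.
    by apply/etaK; rewrite (morph_addB (etaD _)) yK xE subrr.
  by exists s; rewrite -sE addrC subrK.
- have [s' sE] : exists s', x \oc y - idm _ = tv T' \oc s'.
    by apply/etaK'; rewrite (morph_addB (etaD' _)) xK yE subrr.
  by exists s'; rewrite -sE addrC subrK.
- by apply/etaK'; rewrite xK; apply/etaK; exists (idm _); rewrite compm1.
- by apply/etaK; rewrite yK; apply/etaK'; exists (idm _); rewrite compm1.
Qed.

End PresentationComparison.

Section ComparisonComplex.
Variables (C : TriCat) (T T' : triangle C (Sig C)).
Hypotheses (dT : dist T) (dT' : dist T').
Variables (x : Hom (tc T) (tc T')) (y : Hom (tc T') (tc T)).
Variables (s : Hom (tc T) (tb T)) (s' : Hom (tc T') (tb T')).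
Hypotheses (yxE : y \oc x = idm _ + tv T \oc s) (xyE : x \oc y = idm _ + tv T' \oc s').
Variables (f : Hom (ta T) (ta T')) (g : Hom (tb T) (tb T')).
Variables (f' : Hom (ta T') (ta T)) (g' : Hom (tb T') (tb T)).
Hypotheses (mf : tri_morph T T' f g x) (mf' : tri_morph T' T f' g' y).

Let d3 := col f (- tu T).
Let d2 := mx2 (tu T') g 0 (- tv T).
Let d1 := row (tv T') x.

Lemma comparison_d2d3 : d2 \oc d3 = 0.
Proof.
case: mf => gu _ _.
by rewrite /d2 /d3 /mx2 col_comp !row_col compNr gu subrr comp0l compNl compNr opprK
  (dist_vu dT) add0r col00.
Qed.

Lemma comparison_d1d2 : d1 \oc d2 = 0.
Proof.
case: mf => _ xv _.
by rewrite /d1 /d2 /mx2 row_col !comp_row row_add compNr comp0r xv subrr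
  (dist_vu dT') addr0 row00.
Qed.

Lemma comparison_d3_split : exists r3, r3 \oc d3 = idm (ta T).
Proof.
case: mf mf' => _ _ fw [_ _ f'w].
have : Sigm (idm (ta T) - f' \oc f) \oc tw T = 0.
  rewrite Sig_add SigN Sig_comp Sig_id compDl compNl comp1m -compA fw compA f'w.
  by rewrite -compA yxE compDr compm1 compA (dist_wv dT) comp0l addr0 subrr.
move=> /(dist_factor_tu dT) [k kE].
by exists (row f' (- k)); rewrite row_col compNr compNl opprK -kE addrC subrK.
Qed.

Lemma comparison_d1_split : exists s0, d1 \oc s0 = idm (tc T').
Proof. by exists (col (- s') y); rewrite row_col compNr xyE addrC addrK. Qed.

Lemma comparison_d2_coker : weak_coker d3 d2.
Proof.
case: mf => gu _ fw.
move=> z pi; rewrite (row_eta pi) /d3 row_col compNr => /eqP; rewrite subr_eq0 => /eqP.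
set pA := pi \oc bin1 _ _; set pB := pi \oc bin2 _ _ => pAf.
have : Sigm pA \oc tw T' = 0.
  have : Sigm pA \oc tw T' \oc x = 0.
    by rewrite -compA -fw compA -Sig_comp pAf Sig_comp -compA (dist_uw dT) comp0r.
  move/(congr1 (fun t => t \oc y)); rewrite comp0l -compA xyE compDr compm1.
  by rewrite compA -(compA _ (tw T')) (dist_wv dT') comp0r comp0l addr0.
move=> /(dist_factor_tu dT') [b bE].
have : (pB - b \oc g) \oc tu T = 0 by rewrite compBl -compA gu compA -bE pAf subrr.
move=> /(dist_weak_coker dT) [k kE].
exists (row b (- k)); rewrite /d2 /mx2 row_col !comp_row row_add comp0r addr0 -bE.
by rewrite compNr compNl opprK -kE addrC subrK.
Qed.

Lemma comparison_d1_coker : weak_coker d2 d1.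
Proof.
case: mf mf' => _ xv _ [_ yv _].
move=> z pi; rewrite (row_eta pi) /d2 /mx2 row_col !comp_row row_add comp0r addr0 -row00.
set pB := pi \oc bin1 _ _; set pC := pi \oc bin2 _ _.
move=> /row_inj [/(dist_weak_coker dT') [k kE]].
rewrite compNr => /eqP; rewrite addr_eq0 opprK => /eqP pCv.
have : (pC - k \oc x) \oc tv T = 0 by rewrite compBl -compA xv compA -kE pCv subrr.
move=> /(dist_weak_coker_vw dT) [k' k'E].
exists (k + k' \oc tw T \oc y); rewrite /d1 comp_row !compDl; congr row.
  by rewrite -compA yv compA -(compA k') (dist_wv dT) comp0r comp0l addr0.
rewrite -compA yxE compDr compm1 compA -(compA k') (dist_wv dT) comp0r comp0l addr0.
by rewrite -k'E addrC subrK.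
Qed.

Lemma comparison_complex_iso :
  isomorphic (bip (ta T) (bip (tb T') (tc T))) (bip (bip (ta T') (tb T)) (tc T')).
Proof.
have [r3 r3K] := comparison_d3_split.
have [s0 s0K] := comparison_d1_split.
exact: (contractible_complex_iso comparison_d2d3 comparison_d1d2
          comparison_d2_coker comparison_d1_coker r3K s0K).
Qed.

End ComparisonComplex.

Theorem lemmaA1 (C : TriCat) (T T' : triangle C (Sig C)) :
  dist T -> dist T' -> homotopy_equivalent T T' ->
  isomorphic (bip (bip (ta T) (tb T')) (tc T)) (bip (bip (ta T') (tb T)) (tc T')).
Proof.
move=> dT dT' [F [presT presT']].
have [x [y [[s yxE] [s' xyE] [g xv] [g' yv]]]] := presentations_comparison presT presT'.
have [f mf] := tri_morph_completion dT dT' xv.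
have [f' mf'] := tri_morph_completion dT' dT yv.
apply: isomorphic_trans (bip_assoc _ _ _) _.
exact: (comparison_complex_iso dT dT' yxE xyE mf mf').
Qed.
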